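(* Let $n,r$ be integers with $n\ge r+2\ge 2$. There is a constant $C>0$ such that for all $v,w\in F_r=F(t_1,\dots,t_r)$ and all $i\in\{1,\dots,n-1\}$ such that either $v\in[F_r,F_r]$ or $i\in\{r+1,\dots,n-1\}$, we have $$\mathrm{Area}\Big(\big[w(X^{(i)}),v(\Delta)\big]\,\big[w(\Delta),v(\Delta)\big]^{-1}\Big)\le C\cdot\max\{|w|^2,|v|^2\}.$$
   Context: For $\alpha\in\{1,\dots,n\}$ let $F^{(\alpha)}$ be the free group on $a^{(\alpha)}_1,\dots,a^{(\alpha)}_r$, let $\psi\colon F^{(1)}\times\cdots\times F^{(n)}\to\mathbb Z^r$ send each $a^{(\alpha)}_j$ to $e_j$, and $K=\ker\psi$. For $\alpha\in\{1,\dots,n-1\}$, $j\in\{1,\dots,r\}$, $x^{(\alpha)}_j=a^{(\alpha)}_j(a^{(n)}_j)^{-1}$; $X^{(\alpha)}=(x^{(\alpha)}_1,\dots,x^{(\alpha)}_r)$; $X$ is the set of all $x^{(\alpha)}_j$ and $F(X)$ the abstract free group on it; $\Delta=(x^{(1)}_1,\dots,x^{(r)}_r)$. For $w\in F_r$ and a tuple $S=(s_1,\dots,s_r)$ in $F(X)$, $w(S)$ is the image of $w$ under $t_i\mapsto s_i$; $|w|$ is word length in $F_r$. $[g,h]=ghg^{-1}h^{-1}$. Let $\mathcal R=\mathcal R_1\cup\mathcal R_2$ with $\mathcal R_1=\{[x^{(\alpha)}_i,x^{(\beta)}_i]:\alpha\ne\beta\}$, $\mathcal R_2=\{[x^{(\alpha)}_i,x^{(\beta)}_j(x^{(\gamma)}_j)^{-1}]: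 i\neq j,\ \alpha,\beta,\gamma\in\{1,\dots,n-1\}\text{ pairwise distinct}\}$ (defining relators of $K$ on $X$). $\mathrm{Area}(u)$ for $u\in F(X)$ is the least number of conjugates of elements of $\mathcal R^{\pm1}$ whose product equals $u$ in $F(X)$. *)

From mathcomp Require Import all_boot.
Set Implicit Arguments. Unset Strict Implicit. Unset Printing Implicit Defensive.

(* A word over generators of type T: a letter (a, b) is a^{-1} if b = true, else a. *)
Definition word (T : eqType) := seq (T * bool).

Section Free.
Variable T : eqType.

Definition freduce (w : word T) : word T :=
  foldr (fun x acc => match acc with
                      | y :: t => if (y.1 == x.1) && (y.2 != x.2) then t else x :: acc
                      | [::] => [:: x] end) [::] w.

Definition feq (u v : word T) : Prop := freduce u = freduce v.

Definition winv (w : word T) : word T := rev (map (fun x => (x.1, ~~ x.2)) w).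

Definition wcomm (g h : word T) : word T := g ++ h ++ winv g ++ winv h.

End Free.

(* Elements of F_r = F(t_1,...,t_r): words over nat, letter index j stands for t_{j+1};
   valid iff all indices are < r. *)
Definition Fr_word (r : nat) (w : word nat) : bool := all (fun x => x.1 < r) w.

Definition wlen (w : word nat) : nat := size (freduce w).

Definition in_comm_Fr (r : nat) (v : word nat) : Prop :=
  exists l : seq (word nat * word nat),
    all (fun p => Fr_word r p.1 && Fr_word r p.2) l /\
    feq v (flatten [seq wcomm p.1 p.2 | p <- l]).

(* Generators of X: x^{(a)}_j is the pair (a, j) (0-based: a stands for alpha = a+1,
   j for index j+1); valid iff a < n-1 and j < r. *)
Definition Xgen : eqType := (nat * nat)%type.
Definition X_word (n r : nat) (w : word Xgen) : bool :=
  all (fun x => (x.1.1 < n.-1) && (x.1.2 < r)) w.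

Definition xg (a j : nat) : word Xgen := [:: ((a, j), false)].

Definition wsubst (S : nat -> word Xgen) (w : word nat) : word Xgen :=
  flatten [seq (if x.2 then winv (S x.1) else S x.1) | x <- w].

Definition Xtuple (i : nat) : nat -> word Xgen := fun j => xg i j.
Definition Delta : nat -> word Xgen := fun j => xg j j.

Definition is_relator (n r : nat) (rho : word Xgen) : Prop :=
  (exists a b i, [/\ a < n.-1, b < n.-1, i < r, a != b &
                    rho = wcomm (xg a i) (xg b i)]) \/
  (exists a b c i j, [/\ [/\ a < n.-1, b < n.-1, c < n.-1 & i < r], j < r, i != j,
                    [/\ a != b, b != c & a != c] &
                    rho = wcomm (xg a i) (xg b j ++ winv (xg c j))]).

(* Area(u) <= N : u equals in F(X) a product of at most N conjugates of relators^{+-1} *)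
Definition area_le (n r : nat) (u : word Xgen) (N : nat) : Prop :=
  exists l : seq (word Xgen * word Xgen * bool),
    [/\ size l <= N,
        all (fun t => X_word n r t.1.1) l,
        (forall t, t \in l -> is_relator n r t.1.2) &
        feq u (flatten [seq t.1.1 ++ (if t.2 then winv t.1.2 else t.1.2) ++ winv t.1.1 | t <- l])].

(* Write u = w(X^(i)), u' = w(Delta), g = v(Delta), and let tau send i to a spare index
   p >= r (one exists as n >= r + 2) and fix every other index; put g' = v(T) for the
   tuple T = (x^(tau 1)_1, ..., x^(tau r)_r).
   - g = g' with area O(|v|^2): Delta(v) equals rho^e T(v), rho = x^(i)_i (x^(p)_i)^-1,
     where e is the exponent sum of t_i in v, which vanishes for v in [F_r, F_r];
     if i >= r then already g = g'.
   - u g' u^-1 = u' g' u'^-1 with area O(|w| (|w| + |v|)): change the conjugating letters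
     one at a time, first x^(i)_k into x^(tau k)_k, then x^(tau k)_k into x^(k)_k; each
     quotient of old by new letter commutes with every letter of g' (and of the tuples
     involved) by at most two relators.
   - Hence [u, g] = [u, g'] = [u', g'] = [u', g] with quadratic area. *)

From Stdlib Require Import Setoid Morphisms ZArith Lia.
From mathcomp Require Import all_boot zify.
Set Implicit Arguments. Unset Strict Implicit. Unset Printing Implicit Defensive.

Section FreeReduction.
Variable T : eqType.
Implicit Types (u v w s : word T) (x y : T * bool).

Definition linv x := (x.1, ~~ x.2).

Definition cancels x y := (x.1 == y.1) && (x.2 != y.2).

Definition fcons x s : word T :=
  if s is y :: t then (if cancels y x then t else x :: s) else [:: x].

Definition reduced s := sorted (fun x y => ~~ cancels y x) s.

Lemma freduceE w : freduce w = foldr fcons [::] w.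
Proof. by []. Qed.

Lemma winvE w : winv w = rev (map linv w).
Proof. by []. Qed.

Lemma fcons_reduced x s : reduced s -> reduced (fcons x s).
Proof.
case: s => [|y t] //= Hs; case: ifP => Cyx; first exact: path_sorted Hs.
by rewrite /= Cyx.
Qed.

Lemma foldr_reduced s u : reduced s -> reduced (foldr fcons s u).
Proof. by move=> Hs; elim: u => //= x u; apply: fcons_reduced. Qed.

Lemma fconsK x s : reduced s -> fcons x (fcons (linv x) s) = s.
Proof.
case: x => a b; case: s => [|[c d] t] /=; first by rewrite /cancels eqxx; case: b.
rewrite /cancels /=; case: ifP => [/andP[/eqP-> /negPf nd] | _ _].
  2: by rewrite /= /cancels eqxx; case: b.
have -> : d = b by case: b d nd => [] [].
by case: t => [|[e f] t] //= /andP[H _]; rewrite /cancels /= (negPf H).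
Qed.

Lemma cancelsE x y : cancels y x -> y = linv x.
Proof. by case: x y => [a b] [c d] /andP[/= /eqP-> /negPf]; case: b d => [] []. Qed.

Lemma foldr_fcons_comm s x u : reduced s ->
  foldr fcons s (fcons x u) = fcons x (foldr fcons s u).
Proof.
move=> Hs; case: u => [|y t] //=; case: ifP => // /cancelsE ->.
by rewrite /= fconsK //; apply: foldr_reduced.
Qed.

Lemma foldr_fcons_freduce s u : reduced s -> foldr fcons s u = foldr fcons s (freduce u).
Proof. by move=> Hs; elim: u => //= x u ->; rewrite foldr_fcons_comm. Qed.

Lemma freduce_cat u v : freduce (u ++ v) = foldr fcons (freduce v) (freduce u).
Proof. by rewrite freduceE foldr_cat -freduceE foldr_fcons_freduce ?foldr_reduced. Qed.

Lemma winv_cat u v : winv (u ++ v) = winv v ++ winv u.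
Proof. by rewrite !winvE map_cat rev_cat. Qed.

Lemma winv_cons x u : winv (x :: u) = winv u ++ [:: linv x].
Proof. by rewrite -cat1s winv_cat. Qed.

Lemma size_winv u : size (winv u) = size u.
Proof. by rewrite winvE size_rev size_map. Qed.

Lemma winvK : involutive (@winv T).
Proof.
move=> u; rewrite !winvE map_rev revK -map_comp map_id_in // => -[a b] _.
by rewrite /linv /= negbK.
Qed.

Lemma foldr_catV s u : reduced s -> foldr fcons s (u ++ winv u) = s.
Proof.
elim: u s => //= x u IH s Hs.
by rewrite winv_cons catA foldr_cat /= IH ?fconsK ?fcons_reduced.
Qed.

Lemma all_winv (P : pred T) u : all (fun z => P z.1) (winv u) = all (fun z => P z.1) u.
Proof. by rewrite winvE all_rev all_map. Qed.

#[global] Instance feq_equivalence : Equivalence (@feq T).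
Proof. by split => [u | u v E | u v w E1 E2]; rewrite /feq ?E ?E1. Qed.

#[global] Instance cat_proper : Proper (@feq T ==> @feq T ==> @feq T) cat.
Proof. by move=> u u' Eu v v' Ev; rewrite /feq !freduce_cat Eu Ev. Qed.

Lemma wcatV u : feq (u ++ winv u) [::].
Proof. exact: foldr_catV. Qed.

Lemma wVcat u : feq (winv u ++ u) [::].
Proof. by rewrite -{2}(winvK u) wcatV. Qed.

Lemma wcatKV u v : feq (u ++ winv u ++ v) v.
Proof. by rewrite catA wcatV. Qed.

Lemma wcatK u v : feq (winv u ++ u ++ v) v.
Proof. by rewrite catA wVcat. Qed.

#[global] Instance winv_proper : Proper (@feq T ==> @feq T) (@winv T).
Proof.
move=> u v E; rewrite -[winv u]cats0 -(wcatV v).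
have -> : feq (v ++ winv v) (u ++ winv v) by apply: cat_proper.
exact: wcatK.
Qed.

Lemma all_fcons (P : pred (T * bool)) x s : P x -> all P s -> all P (fcons x s).
Proof.
move=> Px; case: s => [|y t] /=; first by rewrite Px.
by case: ifP => _ /andP[Py Pt] //=; rewrite Px Py Pt.
Qed.

Lemma all_freduce (P : pred (T * bool)) w : all P w -> all P (freduce w).
Proof. by elim: w => //= x w IH /andP[Px /IH]; apply: all_fcons. Qed.

Lemma winv_flatten (s : seq (word T)) : winv (flatten s) = flatten (rev (map (@winv T) s)).
Proof. by elim: s => //= u s IH; rewrite winv_cat IH rev_cons -cats1 flatten_cat /= cats0. Qed.

Lemma flatten_conj c (s : seq (word T)) :
  feq (flatten [seq c ++ u ++ winv c | u <- s]) (c ++ flatten s ++ winv c).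
Proof. by elim: s => [|u s IH] /=; rewrite ?wcatV // IH -!catA wcatK. Qed.

#[global] Instance wcomm_proper : Proper (@feq T ==> @feq T ==> @feq T) (@wcomm T).
Proof. by move=> u u' Eu v v' Ev; rewrite /wcomm Eu Ev. Qed.

Lemma winv_wcomm u v : winv (wcomm u v) = wcomm v u.
Proof. by rewrite /wcomm !winv_cat !winvK -!catA. Qed.

End FreeReduction.

Section Power.
Variables (T : eqType) (rho : word T).

Definition wpow (z : Z) : word T :=
  if (0 <=? z)%Z then flatten (nseq (Z.to_nat z) rho)
  else flatten (nseq (Z.to_nat (- z)) (winv rho)).

Lemma wpow0 : wpow 0 = [::].
Proof. by []. Qed.

Lemma wpowS z : feq (rho ++ wpow z) (wpow (1 + z)).
Proof.
rewrite /wpow; case: (Z.leb_spec 0 z) => hz.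
  rewrite (_ : (0 <=? 1 + z)%Z = true); last by apply/Z.leb_le; lia.
  by have -> : Z.to_nat (1 + z) = (Z.to_nat z).+1 by lia.
have [k Ek] : exists k, Z.to_nat (- z) = k.+1 by exists (Z.to_nat (- z)).-1; lia.
rewrite Ek /= -{1}(winvK rho) wcatK; case: (Z.leb_spec 0 (1 + z)) => hz1.
  have -> : Z.to_nat (1 + z) = 0 by lia.
  by have -> : k = 0 by lia.
by have -> : Z.to_nat (- (1 + z)) = k by lia.
Qed.

End Power.

Lemma wpow_winv (T : eqType) (rho : word T) z : wpow (winv rho) z = wpow rho (- z).
Proof.
rewrite /wpow winvK; case: (Z.leb_spec 0 z) => hz; case: (Z.leb_spec 0 (- z)) => hz'.
- by have -> : z = 0%Z by lia.
- by rewrite Z.opp_involutive.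
- by [].
- lia.
Qed.

Lemma wpowP (T : eqType) (rho : word T) z : feq (winv rho ++ wpow rho z) (wpow rho (-1 + z)).
Proof.
have := wpowS (winv rho) (- z); rewrite !wpow_winv Z.opp_involutive.
by have -> : (- (1 + - z) = -1 + z)%Z by lia.
Qed.

Section ExponentSum.
Variable i : nat.
Implicit Types (x : nat * bool) (u v : word nat).

Definition expsum1 x : Z := if x.1 == i then (if x.2 then -1 else 1)%Z else 0%Z.

Definition expsum v : Z := foldr (fun x z => expsum1 x + z)%Z 0%Z v.

Lemma expsum_cons x v : expsum (x :: v) = (expsum1 x + expsum v)%Z.
Proof. by []. Qed.

Lemma expsum_cat u v : expsum (u ++ v) = (expsum u + expsum v)%Z.
Proof. by elim: u => //= x u IH; rewrite -!/(expsum _) IH; lia. Qed.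

Lemma expsum1_linv x : expsum1 (linv x) = (- expsum1 x)%Z.
Proof. by case: x => k []; rewrite /expsum1 /=; case: (k == i). Qed.

Lemma expsum_winv v : expsum (winv v) = (- expsum v)%Z.
Proof.
elim: v => // x v IH; rewrite winv_cons expsum_cat IH !expsum_cons expsum1_linv /=; lia.
Qed.

Lemma expsum_fcons x v : expsum (fcons x v) = (expsum1 x + expsum v)%Z.
Proof.
case: v => [|y v] //; rewrite /fcons; case: ifP => // /cancelsE ->.
by rewrite expsum_cons expsum1_linv; lia.
Qed.

Lemma expsum_freduce v : expsum (freduce v) = expsum v.
Proof. by elim: v => //= x v IH; rewrite -/(freduce v) expsum_fcons IH. Qed.

Lemma expsum_size v : Z.abs_nat (expsum v) <= size v.
Proof.
elim: v => //= x v IH; rewrite -/(expsum v) /expsum1.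
by case: (x.1 == i); case: x.2; lia.
Qed.

Lemma expsum_comm r v : in_comm_Fr r v -> expsum v = 0%Z.
Proof.
move=> [l [_ /(congr1 expsum)]]; rewrite !expsum_freduce => ->.
by elim: l => //= p l IH; rewrite expsum_cat IH /wcomm !expsum_cat !expsum_winv; lia.
Qed.

End ExponentSum.

Section Area.
Variables n r : nat.
Local Notation area := (area_le n r).
Local Notation Xword := (X_word n r).
Implicit Types (u v w c g x y : word Xgen) (N M : nat).

Lemma X_word_cat u v : Xword (u ++ v) = Xword u && Xword v.
Proof. exact: all_cat. Qed.

Lemma X_word_winv u : Xword (winv u) = Xword u.
Proof. exact: (all_winv (fun g : Xgen => (g.1 < n.-1) && (g.2 < r))). Qed.

#[global] Instance area_le_proper : Proper (@feq Xgen ==> eq ==> iff) area.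
Proof.
move=> u u' E N _ <-; split=> -[l [Hl HX Hrel Hu]]; exists l.
  by split; rewrite // -E.
by split; rewrite // E.
Qed.

Lemma area_leW u N M : N <= M -> area u N -> area u M.
Proof. by move=> NM [l [Hl HX Hrel Hu]]; exists l; split; rewrite // (leq_trans Hl). Qed.

Lemma area_le_nil u : feq u [::] -> area u 0.
Proof. by exists [::]. Qed.

Lemma area_le_cat u v N M : area u N -> area v M -> area (u ++ v) (N + M).
Proof.
move=> [l [Hl HX Hrel Hu]] [l' [Hl' HX' Hrel' Hv]]; exists (l ++ l'); split.
- by rewrite size_cat leq_add.
- by rewrite all_cat HX HX'.
- by move=> t; rewrite mem_cat => /orP[]; [apply: Hrel | apply: Hrel'].
- by rewrite map_cat flatten_cat Hu Hv.
Qed.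

Lemma area_le_relator rho : is_relator n r rho -> area rho 1.
Proof.
move=> Hrho; exists [:: ([::], rho, false)]; split => //.
- by move=> t; rewrite inE => /eqP ->.
- by rewrite /= !cats0.
Qed.

Lemma area_le_conj c u N : Xword c -> area u N -> area (c ++ u ++ winv c) N.
Proof.
move=> Xc [l [Hl HX Hrel Hu]]; exists [seq (c ++ t.1.1, t.1.2, t.2) | t <- l]; split.
- by rewrite size_map.
- by rewrite all_map; apply/allP => t tl /=; rewrite X_word_cat Xc (allP HX).
- by move=> t /mapP[t0 t0l ->]; exact: Hrel t0 t0l.
rewrite Hu -flatten_conj -!map_comp /feq; congr (freduce (flatten _)).
apply: eq_map => t /=.
by rewrite winv_cat -!catA.
Qed.

Lemma area_le_winv u N : area u N -> area (winv u) N.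
Proof.
move=> [l [Hl HX Hrel Hu]]; exists (rev [seq (t.1.1, t.1.2, ~~ t.2) | t <- l]); split.
- by rewrite size_rev size_map.
- by rewrite all_rev all_map; apply/allP => t tl /=; rewrite (allP HX).
- by move=> t; rewrite mem_rev => /mapP[t0 t0l ->]; exact: Hrel t0 t0l.
rewrite Hu winv_flatten map_rev -!map_comp /feq; congr (freduce (flatten (rev _))).
by apply: eq_map => -[[a b] []]; rewrite /= !winv_cat ?winvK -catA.
Qed.

Definition area_eqv u v N := area (u ++ winv v) N.

Definition area_comm x y N := area (wcomm x y) N.

#[global] Instance area_eqv_proper :
  Proper (@feq Xgen ==> @feq Xgen ==> eq ==> iff) area_eqv.
Proof. by move=> u u' Eu v v' Ev N _ <-; rewrite /area_eqv Eu Ev. Qed.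

#[global] Instance area_comm_proper :
  Proper (@feq Xgen ==> @feq Xgen ==> eq ==> iff) area_comm.
Proof. by move=> x x' Ex y y' Ey N _ <-; rewrite /area_comm Ex Ey. Qed.

Lemma area_eqv_feq u v : feq u v -> area_eqv u v 0.
Proof. by move=> E; apply: area_le_nil; rewrite E wcatV. Qed.

Lemma area_eqvW u v N M : N <= M -> area_eqv u v N -> area_eqv u v M.
Proof. exact: area_leW. Qed.

Lemma area_eqv_trans u v w N M :
  area_eqv u v N -> area_eqv v w M -> area_eqv u w (N + M).
Proof. by move=> Huv Hvw; have := area_le_cat Huv Hvw; rewrite -catA wcatK. Qed.

Lemma area_eqv_sym u v N : area_eqv u v N -> area_eqv v u N.
Proof. by move/area_le_winv; rewrite winv_cat winvK. Qed.

Lemma area_eqv_catl c u v N : Xword c -> area_eqv u v N -> area_eqv (c ++ u) (c ++ v) N.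
Proof. by move=> Xc /(area_le_conj Xc); rewrite /area_eqv winv_cat !catA. Qed.

Lemma area_eqv_catr c u v N : area_eqv u v N -> area_eqv (u ++ c) (v ++ c) N.
Proof. by rewrite /area_eqv winv_cat -catA wcatKV. Qed.

Lemma area_eqv_winv u v N : Xword u -> area_eqv u v N -> area_eqv (winv u) (winv v) N.
Proof.
move=> Xu /area_le_winv /(area_le_conj (c := winv u)); rewrite X_word_winv => /(_ Xu).
by rewrite /area_eqv !winv_cat !winvK -!catA wVcat cats0.
Qed.

Lemma area_commE x y N : area_comm x y N <-> area_eqv (x ++ y) (y ++ x) N.
Proof. by rewrite /area_eqv winv_cat -!catA. Qed.

Lemma area_comm_sym x y N : area_comm x y N -> area_comm y x N.
Proof. by move/area_le_winv; rewrite winv_wcomm. Qed.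

Lemma area_comm_refl x : area_comm x x 0.
Proof. by apply: area_le_nil; rewrite /wcomm wcatKV wcatV. Qed.

Lemma area_comm_nil x : area_comm x [::] 0.
Proof. by apply: area_le_nil; rewrite /wcomm /= cats0 wcatV. Qed.

Lemma area_comm_catr x a b N M :
  Xword a -> area_comm x a N -> area_comm x b M -> area_comm x (a ++ b) (N + M).
Proof.
move=> Xa Hxa /(area_le_conj Xa) /(area_le_cat Hxa).
by rewrite /area_comm /wcomm !winv_cat -!catA wcatK wcatK.
Qed.

Lemma area_comm_winvr x y N : Xword y -> area_comm x y N -> area_comm x (winv y) N.
Proof.
move=> Xy /area_comm_sym /(area_le_conj (c := winv y)); rewrite X_word_winv => /(_ Xy).
by rewrite /area_comm /wcomm winvK -!catA wcatK.
Qed.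

Lemma area_comm_winvl x y N : Xword x -> area_comm x y N -> area_comm (winv x) y N.
Proof. by move=> Xx /area_comm_sym /(area_comm_winvr Xx) /area_comm_sym. Qed.

Lemma area_eqv_wcomml u u' g N :
  area_eqv (u ++ g ++ winv u) (u' ++ g ++ winv u') N ->
  area_eqv (wcomm u g) (wcomm u' g) N.
Proof. by rewrite /area_eqv winv_wcomm /wcomm !winv_cat !winvK -!catA wcatK. Qed.

Lemma area_eqv_wcommr u g g' N : Xword u -> Xword g' ->
  area_eqv g g' N -> area_eqv (wcomm u g) (wcomm u g') (N + N).
Proof.
move=> Xu Xg' E; apply: (area_eqv_trans (v := u ++ g' ++ winv u ++ winv g)).
  by apply: area_eqv_catl => //; apply: area_eqv_catr.
rewrite /wcomm !catA; apply: area_eqv_catl; first by rewrite !X_word_cat X_word_winv Xu Xg'.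
by apply/area_eqv_sym/area_eqv_winv/area_eqv_sym.
Qed.

End Area.

Definition xtuple (tau : nat -> nat) : nat -> word Xgen := fun k => xg (tau k) k.

Definition wsubst1 (S : nat -> word Xgen) (x : nat * bool) : word Xgen :=
  if x.2 then winv (S x.1) else S x.1.

Lemma wsubst_cons S x w : wsubst S (x :: w) = wsubst1 S x ++ wsubst S w.
Proof. by []. Qed.

Lemma size_wsubst_xtuple tau w : size (wsubst (xtuple tau) w) = size w.
Proof. by elim: w => //= -[k s] w IH; rewrite size_cat IH; case: s. Qed.

Lemma wsubst1_linv S x : wsubst1 S (linv x) = winv (wsubst1 S x).
Proof. by case: x => k []; rewrite /wsubst1 /= ?winvK. Qed.

Lemma wsubst_fcons S x w : feq (wsubst S (fcons x w)) (wsubst S (x :: w)).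
Proof.
case: w => [|y t] //=; case: ifP => // /cancelsE ->.
by rewrite !wsubst_cons wsubst1_linv wcatKV.
Qed.

Lemma wsubst_freduce S w : feq (wsubst S w) (wsubst S (freduce w)).
Proof.
elim: w => // x w IH; rewrite [freduce _]/= -/(freduce w) wsubst_fcons.
by rewrite !wsubst_cons IH.
Qed.

Section Letters.
Variables n r : nat.
Local Notation Xword := (X_word n r).
Local Notation area_eqv := (area_eqv n r).
Local Notation area_comm := (area_comm n r).
Implicit Types (u x y h : word Xgen) (N : nat).

Lemma X_word_xg a k : a < n.-1 -> k < r -> Xword (xg a k).
Proof. by rewrite /X_word /= => -> ->. Qed.

Lemma all_wsubst (P : pred Xgen) S (w : word nat) :
  (forall k, k < r -> all (fun z => P z.1) (S k)) -> Fr_word r w ->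
  all (fun z => P z.1) (wsubst S w).
Proof.
move=> HS; elim: w => //= -[k s] w IH /andP[/= hk hw].
by rewrite all_cat IH // andbT; case: s; rewrite ?all_winv HS.
Qed.

Lemma all_wsubst_xtuple (P : pred Xgen) tau (w : word nat) :
  (forall k, k < r -> P (tau k, k)) -> Fr_word r w ->
  all (fun z => P z.1) (wsubst (xtuple tau) w).
Proof. by move=> HP; apply: all_wsubst => k hk; rewrite /= HP. Qed.

Lemma X_word_wsubst_xtuple tau (w : word nat) :
  (forall k, k < r -> tau k < n.-1) -> Fr_word r w -> Xword (wsubst (xtuple tau) w).
Proof.
move=> Htau; apply: (all_wsubst_xtuple (P := fun g : Xgen => (g.1 < n.-1) && (g.2 < r))).
by move=> k hk /=; rewrite Htau.
Qed.

Lemma area_comm_xg a b k :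
  a < n.-1 -> b < n.-1 -> k < r -> area_comm (xg a k) (xg b k) 1.
Proof.
move=> ha hb hk; have [<-|neq_ab] := eqVneq a b; first exact: area_leW (area_comm_refl _ _ _).
by apply: area_le_relator; left; exists a, b, k.
Qed.

Lemma area_comm_xg_quot a b c m k :
  a < n.-1 -> b < n.-1 -> c < n.-1 -> m < r -> k < r ->
  [|| b == c, m == k | (a != b) && (a != c)] ->
  area_comm (xg a m) (xg b k ++ winv (xg c k)) 2.
Proof.
(* b = c: trivially; m = k: two relators of R1; otherwise one relator of R2 *)
move=> ha hb hc hm hk; have [<- _|neq_bc] := eqVneq b c.
  by rewrite wcatV; apply: area_leW (area_comm_nil _ _ _).
have [<- _|neq_mk] := eqVneq m k.
  apply: (area_comm_catr (N := 1)); first exact: X_word_xg.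
    exact: area_comm_xg.
  by apply: area_comm_winvr; [exact: X_word_xg | exact: area_comm_xg].
move=> /andP[neq_ab neq_ac]; apply: (area_leW (N := 1)) => //.
by apply: area_le_relator; right; exists a, b, c, m, k.
Qed.

Lemma area_comm_letters (ok : pred Xgen) x h c :
  (forall a, ok a -> Xword [:: (a, false)] -> area_comm x [:: (a, false)] c) ->
  all (fun z => ok z.1) h -> Xword h -> area_comm x h (c * size h).
Proof.
move=> Hok; elim: h => [|[a s] h IH] /=; first by rewrite muln0 => _ _; apply: area_comm_nil.
move=> /andP[oka okh] /andP[Xa Xh]; rewrite mulnS -cat1s.
have Xa1 : Xword [:: (a, false)] by rewrite /X_word /= Xa.
have Ha := Hok a oka Xa1.
apply: area_comm_catr; [by rewrite /X_word /= Xa | | exact: IH].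
by case: s; [exact: area_comm_winvr Xa1 Ha | exact: Ha].
Qed.

Lemma area_eqv_conj_swap s t G N :
  area_comm (s ++ winv t) (t ++ G ++ winv t) N ->
  area_eqv (s ++ G ++ winv s) (t ++ G ++ winv t) N.
Proof. by rewrite /area_comm /area_eqv /wcomm !winv_cat !winvK -!catA wcatK wcatK. Qed.

Lemma area_eqv_conjV_swap s t G N : Xword t -> Xword (s ++ winv t) ->
  area_comm (s ++ winv t) G N ->
  area_eqv (winv s ++ G ++ s) (winv t ++ G ++ t) N.
Proof.
move=> Xt Xst /(area_comm_winvl Xst) /(area_le_conj (c := winv t)).
rewrite X_word_winv => /(_ Xt).
by rewrite /area_eqv /wcomm !winv_cat !winvK -!catA wcatK.
Qed.

Lemma area_comm_wpow y rho N z :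
  Xword rho -> area_comm y rho N -> area_comm y (wpow rho z) (N * Z.abs_nat z).
Proof.
have comm_pow u k : Xword u -> area_comm y u N -> area_comm y (flatten (nseq k u)) (N * k).
  move=> Xu Hu; elim: k => [|k IH]; first by rewrite muln0; apply: area_comm_nil.
  by rewrite mulnS; apply: area_comm_catr.
move=> Xrho Hrho; rewrite /wpow; case: (Z.leb_spec 0 z) => hz.
  have -> : Z.abs_nat z = Z.to_nat z by lia.
  exact: comm_pow.
have -> : Z.abs_nat z = Z.to_nat (- z) by lia.
by apply: comm_pow; [rewrite X_word_winv | apply: area_comm_winvr].
Qed.

End Letters.

Section ConjugateSwap.
Variables (n r : nat) (sigma tau : nat -> nat) (ok : pred Xgen) (c : nat).
Local Notation Xword := (X_word n r).
Local Notation area_eqv := (area_eqv n r).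
Local Notation S := (xtuple sigma).
Local Notation T := (xtuple tau).
Hypothesis sigma_tau_lt : forall k, k < r -> sigma k < n.-1 /\ tau k < n.-1.
Hypothesis ok_tau : forall k, k < r -> ok (tau k, k).
Hypothesis comm_ok : forall k a, k < r -> ok a -> Xword [:: (a, false)] ->
  area_comm n r (xg (sigma k) k ++ winv (xg (tau k) k)) [:: (a, false)] c.

Lemma area_eqv_conj_swap1 x G : x.1 < r -> all (fun z => ok z.1) G -> Xword G ->
  area_eqv (wsubst1 S x ++ G ++ winv (wsubst1 S x)) (wsubst1 T x ++ G ++ winv (wsubst1 T x))
    (c * (size G + 2)).
Proof.
case: x => k s /= hk okG XG; have [hs ht] := sigma_tau_lt hk.
have XT : Xword (xg (tau k) k) by exact: X_word_xg.
have comm W : all (fun z => ok z.1) W -> Xword W ->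
    area_comm n r (xg (sigma k) k ++ winv (xg (tau k) k)) W (c * size W).
  by apply: area_comm_letters => a; apply: comm_ok.
rewrite /wsubst1 /=; case: s.
  rewrite !winvK; apply: area_eqvW (area_eqv_conjV_swap XT _ (comm G okG XG)).
    by rewrite leq_mul2l leq_addr orbT.
  by rewrite X_word_cat X_word_winv XT X_word_xg.
apply: area_eqv_conj_swap.
have -> : size G + 2 = size (xg (tau k) k ++ G ++ winv (xg (tau k) k)).
  by rewrite !size_cat size_winv /=; lia.
apply: comm; rewrite /xtuple ?all_cat ?all_winv ?X_word_cat ?X_word_winv /=.
  by rewrite ok_tau ?okG.
by rewrite XG hk ht.
Qed.

Lemma area_eqv_conj_swap_tuple w H : Fr_word r w -> all (fun z => ok z.1) H -> Xword H ->
  area_eqv (wsubst S w ++ H ++ winv (wsubst S w)) (wsubst T w ++ H ++ winv (wsubst T w))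
    (c * size w * (2 * size w + size H)).
Proof.
elim: w => [|x w IH] /=; first by rewrite muln0 mul0n => *; apply: area_eqv_feq.
move=> /andP[hx hw] okH XH; rewrite !wsubst_cons !winv_cat -!catA.
have XSx : Xword (wsubst1 S x).
  have [hs _] := sigma_tau_lt hx.
  by rewrite /wsubst1; case: x.2; rewrite ?X_word_winv X_word_xg.
have XTw : Xword (wsubst T w).
  by apply: X_word_wsubst_xtuple => // k hk; case: (sigma_tau_lt hk).
have E1 := area_eqv_catl XSx (area_eqv_catr (winv (wsubst1 S x)) (IH hw okH XH)).
have E2 := @area_eqv_conj_swap1 x (wsubst T w ++ H ++ winv (wsubst T w)) hx.
rewrite -!catA in E1 E2; apply: area_eqvW (area_eqv_trans E1 (E2 _ _)).
- rewrite !size_cat size_winv size_wsubst_xtuple; move: (size w) (size H) => a b; nia.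
- have okTw : all (fun z => ok z.1) (wsubst T w).
    exact: all_wsubst_xtuple ok_tau hw.
  by rewrite !all_cat all_winv okH okTw.
- by rewrite !X_word_cat X_word_winv XTw XH.
Qed.

End ConjugateSwap.

Definition redirect (i p k : nat) : nat := if k == i then p else k.

Section Redirect.
Variables n r i p : nat.
Hypotheses (le_r_p : r <= p) (lt_p_n : p < n.-1).
Local Notation Xword := (X_word n r).
Local Notation area_eqv := (area_eqv n r).
Local Notation area_comm := (area_comm n r).
Local Notation tau := (redirect i p).

Lemma redirect_lt k : k < r -> tau k < n.-1.
Proof. by rewrite /redirect; case: (eqVneq k i) => _ hk; lia. Qed.

Lemma redirect_neq k : k < r -> tau k != i.
Proof. by rewrite /redirect; case: (eqVneq k i) => [->|] //= hk; apply/eqP; lia. Qed.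

Lemma redirect_inj k m : k < r -> m < r -> tau k = tau m -> k = m.
Proof.
by rewrite /redirect; case: (eqVneq k i) => [->|_]; case: (eqVneq m i) => [->|_] //; lia.
Qed.

Section DeltaToTuple.
Hypothesis lt_i_r : i < r.
(* Delta_i = rho x^(p)_i, and rho commutes with x^(p)_i and with every x^(k)_k, k <> i,
   so the letters t_i^(+-1) of v can be traded for powers of rho moved to the left. *)
Local Notation rho := (xg i i ++ winv (xg p i)).

Lemma X_word_rho : Xword rho.
Proof. by rewrite X_word_cat X_word_winv !X_word_xg //; lia. Qed.

Lemma area_comm_xg_rho k : k < r -> k != i -> area_comm (xg k k) rho 2.
Proof.
move=> hk nki; have nkp : k != p by apply/eqP; lia.
by apply: area_comm_xg_quot => //; try lia; rewrite nki nkp !orbT.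
Qed.

Lemma area_comm_xg_p_rho : area_comm (xg p i) rho 2.
Proof. by apply: area_comm_xg_quot => //; try lia; rewrite eqxx orbT. Qed.

Lemma area_comm_wpow_rho u z : Xword u -> area_comm u rho 2 ->
  area_comm u (wpow rho z) (2 * Z.abs_nat z).
Proof. by move=> Xu Hu; apply: area_comm_wpow => //; exact: X_word_rho. Qed.

Lemma area_eqv_xg_wpow z :
  area_eqv (xg i i ++ wpow rho z) (wpow rho (1 + z) ++ xg p i) (2 * Z.abs_nat z).
Proof.
have -> : feq (xg i i ++ wpow rho z) (rho ++ xg p i ++ wpow rho z) by rewrite -catA wcatK.
rewrite -wpowS -[(_ ++ wpow rho z) ++ _]catA; apply: area_eqv_catl; first exact: X_word_rho.
apply/area_commE/area_comm_wpow_rho; last exact: area_comm_xg_p_rho.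
by apply: X_word_xg; lia.
Qed.

Lemma area_eqv_xgV_wpow z :
  area_eqv (winv (xg i i) ++ wpow rho z) (wpow rho (-1 + z) ++ winv (xg p i))
    (2 * Z.abs_nat (-1 + z)).
Proof.
have -> : feq (winv (xg i i) ++ wpow rho z) (winv (xg p i) ++ winv rho ++ wpow rho z).
  by rewrite winv_cat winvK -catA wcatK.
have Xp : Xword (xg p i) by apply: X_word_xg; lia.
rewrite wpowP; apply/area_commE/area_comm_wpow_rho; first by rewrite X_word_winv.
exact: area_comm_winvl area_comm_xg_p_rho.
Qed.

Lemma area_eqv_delta_letter k s z : k < r ->
  area_eqv (wsubst1 Delta (k, s) ++ wpow rho z)
           (wpow rho (expsum1 i (k, s) + z) ++ wsubst1 (xtuple tau) (k, s))
           (2 * (Z.abs_nat z).+1).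
Proof.
move=> hk; have [->|nki] := eqVneq k i.
  have -> : expsum1 i (i, s) = if s then (-1)%Z else 1%Z by rewrite /expsum1 eqxx.
  rewrite /wsubst1; have -> : xtuple tau i = xg p i by rewrite /xtuple /redirect eqxx.
  by case: s; [apply: area_eqvW (area_eqv_xgV_wpow z) | apply: area_eqvW (area_eqv_xg_wpow z)];
    lia.
have -> : wsubst1 (xtuple tau) (k, s) = wsubst1 Delta (k, s).
  by rewrite /wsubst1 /xtuple /redirect /Delta (negPf nki).
have Xk : Xword (xg k k) by apply: X_word_xg; lia.
rewrite /expsum1 (negPf nki) Z.add_0_l; apply/area_commE.
apply: area_leW (area_comm_wpow_rho z _ _); first lia.
  by rewrite /wsubst1; case: s; rewrite ?X_word_winv.
have Hk := area_comm_xg_rho hk nki.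
by rewrite /wsubst1; case: s; [exact: area_comm_winvl Hk | exact: Hk].
Qed.

Lemma area_eqv_delta_wpow v : Fr_word r v ->
  area_eqv (wsubst Delta v) (wpow rho (expsum i v) ++ wsubst (xtuple tau) v)
    (2 * size v * size v).
Proof.
elim: v => [_|[k s] v IH]; first exact: area_eqv_feq.
move=> /andP[hk hv]; have {}hk : k < r := hk; rewrite !wsubst_cons expsum_cons.
have Xk : Xword (wsubst1 Delta (k, s)).
  by rewrite /wsubst1; case: s; rewrite ?X_word_winv X_word_xg //=; lia.
have E1 := area_eqv_catl Xk (IH hv).
have E2 := area_eqv_catr (wsubst (xtuple tau) v) (area_eqv_delta_letter s (expsum i v) hk).
rewrite -!catA in E2; apply: area_eqvW (area_eqv_trans E1 E2).
by have := expsum_size i v; rewrite /=; nia.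
Qed.

End DeltaToTuple.

Section Commutators.
Hypothesis lt_i_n : i < n.-1.

Lemma area_comm_const_redirect k m : k < r -> m < r ->
  area_comm (xg i k ++ winv (xg (tau k) k)) (xg (tau m) m) 2.
Proof.
move=> hk hm; apply: area_comm_sym; apply: area_comm_xg_quot => //;
  try exact: redirect_lt.
have [->|nmk] := eqVneq m k; first by rewrite eqxx orbT.
rewrite (redirect_neq hm); apply/or3P/Or33/eqP => /(redirect_inj hm hk).
exact/eqP.
Qed.

Lemma area_comm_redirect_id k m a : k < r -> m < r -> (a == m) || (a == tau m) ->
  area_comm (xg (tau k) k ++ winv (xg k k)) (xg a m) 2.
Proof.
move=> hk hm ham; apply: area_comm_sym; apply: area_comm_xg_quot => //; try lia;
  try exact: redirect_lt.
  by case/orP: ham => /eqP ->; [lia | exact: redirect_lt].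
move: ham; rewrite /redirect; case: (eqVneq k i) => [eki|_] //=; last by rewrite eqxx.
case: (eqVneq m i) => [emi|nmi] /=; first by rewrite emi eki eqxx /= orbT.
by rewrite orbb => /eqP ->; rewrite eki nmi (_ : m != p) ?orbT //; apply/eqP; lia.
Qed.

Lemma area_eqv_delta_xtuple v : Fr_word r v -> (i < r -> expsum i v = 0%Z) ->
  area_eqv (wsubst Delta v) (wsubst (xtuple tau) v) (2 * size v * size v).
Proof.
move=> hv e0; case: (ltnP i r) => [lt_i_r | le_r_i].
  by have := area_eqv_delta_wpow lt_i_r hv; rewrite (e0 lt_i_r) wpow0.
have -> : wsubst (xtuple tau) v = wsubst Delta v.
  rewrite /wsubst; congr flatten; apply/eq_in_map => -[k s] /(allP hv) /= hk.
  have nki : k != i by apply/eqP; lia.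
  by rewrite /xtuple /redirect (negPf nki).
by apply: (area_eqvW (N := 0)) => //; apply: area_eqv_feq.
Qed.

Lemma area_eqv_conj_const_redirect w v : Fr_word r w -> Fr_word r v ->
  area_eqv (wsubst (Xtuple i) w ++ wsubst (xtuple tau) v ++ winv (wsubst (Xtuple i) w))
           (wsubst (xtuple tau) w ++ wsubst (xtuple tau) v ++ winv (wsubst (xtuple tau) w))
           (2 * size w * (2 * size w + size v)).
Proof.
move=> hw hv; rewrite -(size_wsubst_xtuple tau v).
pose ok (a : Xgen) := (a.2 < r) && (a.1 == tau a.2).
apply: (@area_eqv_conj_swap_tuple n r (fun=> i) tau ok) => //.
- by move=> k hk; split => //; exact: redirect_lt.
- by move=> k hk; rewrite /ok /= hk eqxx.
- by move=> k [b m] hk /andP[/= hm /eqP ->] _; exact: area_comm_const_redirect.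
- by apply: (all_wsubst_xtuple (P := ok) _ hv) => k hk; rewrite /ok /= hk eqxx.
- by apply: X_word_wsubst_xtuple => // k; exact: redirect_lt.
Qed.

Lemma area_eqv_conj_redirect_id w v : Fr_word r w -> Fr_word r v ->
  area_eqv (wsubst (xtuple tau) w ++ wsubst (xtuple tau) v ++ winv (wsubst (xtuple tau) w))
           (wsubst Delta w ++ wsubst (xtuple tau) v ++ winv (wsubst Delta w))
           (2 * size w * (2 * size w + size v)).
Proof.
move=> hw hv; rewrite -(size_wsubst_xtuple tau v).
pose ok (a : Xgen) := (a.2 < r) && ((a.1 == a.2) || (a.1 == tau a.2)).
apply: (@area_eqv_conj_swap_tuple n r tau id ok) => //.
- by move=> k hk; split; [exact: redirect_lt | lia].
- by move=> k hk; rewrite /ok /= hk eqxx.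
- by move=> k [b m] hk /andP[/= hm hb] _; exact: area_comm_redirect_id.
- by apply: (all_wsubst_xtuple (P := ok) _ hv) => k hk; rewrite /ok /= hk eqxx orbT.
- by apply: X_word_wsubst_xtuple => // k; exact: redirect_lt.
Qed.

Lemma area_eqv_commutators v w : Fr_word r v -> Fr_word r w ->
  (i < r -> expsum i v = 0%Z) ->
  area_eqv (wcomm (wsubst (Xtuple i) w) (wsubst Delta v))
           (wcomm (wsubst Delta w) (wsubst Delta v))
           (20 * maxn (size w ^ 2) (size v ^ 2)).
Proof.
move=> hv hw e0.
have XG : Xword (wsubst (xtuple tau) v).
  by apply: X_word_wsubst_xtuple => // k; exact: redirect_lt.
have XU : Xword (wsubst (Xtuple i) w) by apply: (X_word_wsubst_xtuple (tau := fun=> i)).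
have XD : Xword (wsubst Delta w) by apply: (X_word_wsubst_xtuple (tau := id)) => // k hk; lia.
have Hg := area_eqv_delta_xtuple hv e0.
have Hconj := area_eqv_trans (area_eqv_conj_const_redirect hw hv)
  (area_eqv_conj_redirect_id hw hv).
have := area_eqv_trans (area_eqv_wcommr XU XG Hg)
  (area_eqv_trans (area_eqv_wcomml Hconj) (area_eqv_sym (area_eqv_wcommr XD XG Hg))).
apply: area_eqvW; move: (size w) (size v) => a b.
have : a * b <= maxn (a ^ 2) (b ^ 2).
  by case: (leqP a b) => hab; [apply: leq_trans (leq_maxr _ _) | apply: leq_trans (leq_maxl _ _)];
    rewrite ?leq_mul2r ?leq_mul2l ?hab ?(ltnW hab) ?orbT.
have := leq_maxl (a ^ 2) (b ^ 2); have := leq_maxr (a ^ 2) (b ^ 2); nia.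
Qed.

End Commutators.

End Redirect.

Theorem lemma3p13 (n r : nat) (hnr : r.+2 <= n) :
  exists C : nat, 0 < C /\
    forall (v w : word nat) (i : nat),
      Fr_word r v -> Fr_word r w -> i < n.-1 ->
      (in_comm_Fr r v \/ r <= i) ->
      area_le n r
        (wcomm (wsubst (Xtuple i) w) (wsubst Delta v) ++
         winv (wcomm (wsubst Delta w) (wsubst Delta v)))
        (C * maxn (wlen w ^ 2) (wlen v ^ 2)).
Proof.
have lt_r_n : r < n.-1 by lia.
exists 20; split=> // v w i hv hw lt_i_n Hcase.
have e0 : i < r -> expsum i (freduce v) = 0%Z.
  move=> lt_i_r; rewrite expsum_freduce.
  by case: Hcase => [/expsum_comm | le_r_i] //; lia.
rewrite (wsubst_freduce _ w) (wsubst_freduce _ w) (wsubst_freduce _ v).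
exact: (area_eqv_commutators (leqnn r) lt_r_n lt_i_n (all_freduce hv) (all_freduce hw) e0).
Qed.
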